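(* Let $n\ge 1$ be an integer and $0<\rho<1$. Consider the difference equation $$x_k - C_n^1\rho\, x_{k-1} + C_n^2\rho^2 x_{k-2} - \dots + (-1)^n\rho^n x_{k-n}=0,\qquad k=n,n+1,\dots,$$ (whose characteristic polynomial is $(\lambda-\rho)^n$) with initial conditions $x^{(0)}=(x_0,\dots,x_{n-1})\in\mathbb R^n$. For $i=0,\dots,n-1$ let $P_i(k)=\prod_{j\in\{0,\dots,n-1\},\,j\ne i}\frac{k-j}{i-j}$. Then: (i) for all $k\ge 0$, $$x_k=\sum_{i=0}^{n-1} x_i\,P_i(k)\,\rho^{k-i};$$ (ii) for every $k\ge n$, $\max_{\|x^{(0)}\|_\infty\le 1} x_k=\alpha_{k,n}:=\sum_{i=0}^{n-1}|P_i(k)|\rho^{k-i}$, and this maximum is attained at $x^{(0)}=((-1)^{n-1},\dots,1,-1,1)$, i.e. $x_i=(-1)^{n-1-i}$; consequently, for all $\|x^{(0)}\|_\infty\le1$ and $k\ge n$ one has $|x_k|\le\alpha_{k,n}$, and $\max_{\|x^{(0)}\|_\infty\le1}\eta(x^{(0)})=\max_{k\ge n}\alpha_{k,n}$, attained for $x^{(0)}=((-1)^{n-1},\dots,-1,1)$ at an index $k=K_\alpha\in\arg\max_{k\ge n}\alpha_{k,n}$; (iii) for the initial condition $x^{(0)}=(0,\dots,0,1)$ the solution is $x_k=\beta_{k,n}:=C_k^{n-1}\rho^{k-n+1}$ for all $k\ge n-1$, the maximum of $\beta_{k,n}$ over $k\ge n-1$ is attained at $k=K_\beta=\lfloor \frac{n-1}{1-\rho}\rfloor$,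 and $\max_{k\ge n}\beta_{k,n}>1$ (i.e. a peak occurs) if and only if $\rho>1/n$.
   Context: $C_p^q=\frac{p!}{q!(p-q)!}$. For a solution of an $n$th order scalar difference equation with initial vector $x^{(0)}=(x_0,\dots,x_{n-1})$, the peak is $\eta(x^{(0)})=\max_{k\ge n}|x_k|$; one says a peak occurs when $\eta(x^{(0)})>1$ for an initial condition with $\|x^{(0)}\|_\infty=1$. *)

From Stdlib Require Import Reals Lra Lia List.
Open Scope R_scope.

Definition rsum (n : nat) (f : nat -> R) : R :=
  fold_right Rplus 0 (map f (seq 0 n)).
Definition rprod (n : nat) (f : nat -> R) : R :=
  fold_right Rmult 1 (map f (seq 0 n)).

Definition solves (n : nat) (rho : R) (x : nat -> R) : Prop :=
  forall k : nat, (n <= k)%nat ->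
    rsum (S n) (fun j => (-1) ^ j * C n j * rho ^ j * x (k - j)%nat) = 0.

Definition P (n i k : nat) : R :=
  rprod n (fun j => if Nat.eqb j i then 1 else (INR k - INR j) / (INR i - INR j)).

(* alpha_{k,n} = sum_{i<n} |P_i(k)| rho^(k-i)  (used for k >= n) *)
Definition alpha (n : nat) (rho : R) (k : nat) : R :=
  rsum n (fun i => Rabs (P n i k) * rho ^ (k - i)).

(* beta_{k,n} = C(k, n-1) rho^(k-n+1)  (used for k >= n-1) *)
Definition beta (n : nat) (rho : R) (k : nat) : R :=
  C k (n - 1) * rho ^ (k + 1 - n).

Definition init_bounded (n : nat) (x : nat -> R) : Prop :=
  forall i : nat, (i < n)%nat -> Rabs (x i) <= 1.

Definition alt_init (n : nat) (x : nat -> R) : Prop :=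
  forall i : nat, (i < n)%nat -> x i = (-1) ^ (n - 1 - i).

Definition unit_init (n : nat) (x : nat -> R) : Prop :=
  forall i : nat, (i < n)%nat -> x i = if Nat.eqb i (n - 1) then 1 else 0.

From Stdlib Require Import Reals Lra Lia List Factorial.
Open Scope R_scope.

(* Writing x_k = rho^k F(k), the recurrence with characteristic polynomial
   (lambda - rho)^n says exactly that the n-th backward difference of F vanishes.
   The Lagrange interpolant of the initial data is a polynomial of degree < n, so
   rho^k times it solves the recurrence, and by uniqueness it is x; this is (i).
   For k >= n the sign of P_i(k) is (-1)^(n-1-i), so the alternating initial
   condition turns every term of (i) into |P_i(k)| rho^(k-i), giving (ii); the
   maximum over k exists because alpha_{k,n} <= n k^n rho^(k-n) tends to 0.
   For (0,...,0,1) only P_{n-1}(k) = C(k, n-1) survives, and beta is unimodal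
   since beta_{k+1}/beta_k = (k+1) rho / (k+2-n). *)

Lemma fold_right_Rplus_acc (l : list R) r : fold_right Rplus r l = fold_right Rplus 0 l + r.
Proof. induction l as [|a l IH]; simpl; [|rewrite IH]; ring. Qed.

Lemma fold_right_Rmult_acc (l : list R) r : fold_right Rmult r l = fold_right Rmult 1 l * r.
Proof. induction l as [|a l IH]; simpl; [|rewrite IH]; ring. Qed.

Lemma rsum_0 f : rsum 0 f = 0.
Proof. reflexivity. Qed.

Lemma rsum_S n f : rsum (S n) f = rsum n f + f n.
Proof.
  unfold rsum. rewrite seq_S, map_app, fold_right_app. simpl.
  rewrite fold_right_Rplus_acc. ring.
Qed.

Lemma rprod_0 f : rprod 0 f = 1.
Proof. reflexivity. Qed.

Lemma rprod_S n f : rprod (S n) f = rprod n f * f n.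
Proof.
  unfold rprod. rewrite seq_S, map_app, fold_right_app. simpl.
  rewrite fold_right_Rmult_acc. ring.
Qed.

Lemma rsum_ext n f g : (forall i, (i < n)%nat -> f i = g i) -> rsum n f = rsum n g.
Proof.
  induction n as [|n IH]; intros Hfg; [reflexivity|].
  rewrite !rsum_S, IH, Hfg; auto with arith.
Qed.

Lemma rprod_ext n f g : (forall i, (i < n)%nat -> f i = g i) -> rprod n f = rprod n g.
Proof.
  induction n as [|n IH]; intros Hfg; [reflexivity|].
  rewrite !rprod_S, IH, Hfg; auto with arith.
Qed.

Lemma rsum_shift n f : rsum (S n) f = f 0%nat + rsum n (fun j => f (S j)).
Proof.
  induction n as [|n IH]; [rewrite rsum_S, !rsum_0; ring|].
  rewrite rsum_S, IH, (rsum_S n). ring.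
Qed.

Lemma rsum_minus n f g : rsum n (fun i => f i - g i) = rsum n f - rsum n g.
Proof. induction n as [|n IH]; [rewrite !rsum_0|rewrite !rsum_S, IH]; ring. Qed.

Lemma rsum_scal n c f : rsum n (fun i => c * f i) = c * rsum n f.
Proof. induction n as [|n IH]; [rewrite !rsum_0|rewrite !rsum_S, IH]; ring. Qed.

Lemma rsum_const n c : rsum n (fun _ => c) = INR n * c.
Proof. induction n as [|n IH]; [rewrite rsum_0|rewrite rsum_S, IH, S_INR]; simpl; ring. Qed.

Lemma rsum_le n f g : (forall i, (i < n)%nat -> f i <= g i) -> rsum n f <= rsum n g.
Proof.
  induction n as [|n IH]; intros Hfg; [rewrite !rsum_0; lra|].
  rewrite !rsum_S. apply Rplus_le_compat; auto with arith.
Qed.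

Lemma rsum_abs n f : Rabs (rsum n f) <= rsum n (fun i => Rabs (f i)).
Proof.
  induction n as [|n IH]; [rewrite !rsum_0, Rabs_R0; lra|].
  rewrite !rsum_S. eapply Rle_trans; [apply Rabs_triang|lra].
Qed.

Lemma rsum_single n k f : (k < n)%nat ->
  (forall i, (i < n)%nat -> i <> k -> f i = 0) -> rsum n f = f k.
Proof.
  induction n as [|n IH]; intros Hk Hf; [lia|].
  rewrite rsum_S. destruct (Nat.eq_dec k n) as [->|Hne].
  - rewrite (rsum_ext n f (fun _ => 0)), rsum_const by (intros; apply Hf; lia). ring.
  - rewrite IH, (Hf n); [ring|lia|lia|lia|intros; apply Hf; lia].
Qed.

Lemma rprod_add a b f : rprod (a + b) f = rprod a f * rprod b (fun j => f (a + j)%nat).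
Proof.
  induction b as [|b IH]; [rewrite Nat.add_0_r, rprod_0; ring|].
  rewrite Nat.add_succ_r, !rprod_S, IH. ring.
Qed.

Lemma rprod_zero n f j : (j < n)%nat -> f j = 0 -> rprod n f = 0.
Proof.
  induction n as [|n IH]; intros Hj Hf; [lia|].
  rewrite rprod_S. destruct (Nat.eq_dec j n) as [->|Hne].
  - rewrite Hf. ring.
  - rewrite IH; [ring|lia|exact Hf].
Qed.

Lemma rprod_div n a b : rprod n (fun j => a j / b j) = rprod n a / rprod n b.
Proof.
  induction n as [|n IH]; [rewrite !rprod_0; field|].
  rewrite !rprod_S, IH. unfold Rdiv. rewrite Rinv_mult. ring.
Qed.

Lemma rprod_const n c : rprod n (fun _ => c) = c ^ n.
Proof. induction n as [|n IH]; [reflexivity|]. rewrite rprod_S, IH. simpl. ring. Qed.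

Lemma rprod_abs_le n f B : 0 <= B -> (forall i, (i < n)%nat -> Rabs (f i) <= B) ->
  Rabs (rprod n f) <= B ^ n.
Proof.
  intros HB. induction n as [|n IH]; intros Hf.
  - rewrite rprod_0, Rabs_R1. simpl. lra.
  - rewrite rprod_S, Rabs_mult, <- tech_pow_Rmult, Rmult_comm.
    apply Rmult_le_compat; auto using Rabs_pos with arith.
Qed.

Definition bdiff (f : R -> R) (t : R) : R := f t - f (t - 1).

Fixpoint bdiff_iter (k : nat) (f : R -> R) : R -> R :=
  match k with O => f | S k => bdiff_iter k (bdiff f) end.

Lemma bdiff_iter_ext k : forall f g, (forall t, f t = g t) ->
  forall t, bdiff_iter k f t = bdiff_iter k g t.
Proof.
  induction k as [|k IH]; intros f g Hfg t; simpl; auto.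
  apply IH. intros s. unfold bdiff. rewrite !Hfg. reflexivity.
Qed.

Lemma bdiff_iter_plus k : forall f g t,
  bdiff_iter k (fun t => f t + g t) t = bdiff_iter k f t + bdiff_iter k g t.
Proof.
  induction k as [|k IH]; intros f g t; simpl; auto.
  rewrite <- IH. apply bdiff_iter_ext. intros s. unfold bdiff. ring.
Qed.

Lemma bdiff_iter_scal k : forall c f t,
  bdiff_iter k (fun t => c * f t) t = c * bdiff_iter k f t.
Proof.
  induction k as [|k IH]; intros c f t; simpl; auto.
  rewrite <- IH. apply bdiff_iter_ext. intros s. unfold bdiff. ring.
Qed.

Lemma bdiff_iter_shift k : forall f t,
  bdiff_iter k (fun t => f (t - 1)) t = bdiff_iter k f (t - 1).
Proof.
  induction k as [|k IH]; intros f t; simpl; auto.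
  rewrite <- IH. apply bdiff_iter_ext. intros s. reflexivity.
Qed.

Lemma bdiff_iter_const k c t : bdiff_iter (S k) (fun _ => c) t = 0.
Proof.
  simpl. rewrite (bdiff_iter_ext k _ (fun s => 0 * s)), bdiff_iter_scal.
  - ring.
  - intros s. unfold bdiff. ring.
Qed.

(* The finite-difference notion of "polynomial of degree at most m":
   the (m+1)-st backward difference vanishes identically. *)
Definition deg_le (m : nat) (f : R -> R) : Prop := forall t, bdiff_iter (S m) f t = 0.

Lemma deg_le_S_bdiff m f : deg_le (S m) f <-> deg_le m (bdiff f).
Proof. reflexivity. Qed.

Lemma deg_le_ext m f g : (forall t, f t = g t) -> deg_le m f -> deg_le m g.
Proof. intros Hfg Hf t. rewrite <- (bdiff_iter_ext _ f g Hfg). apply Hf. Qed.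

Lemma deg_le_plus m f g : deg_le m f -> deg_le m g -> deg_le m (fun t => f t + g t).
Proof. intros Hf Hg t. rewrite bdiff_iter_plus, Hf, Hg. ring. Qed.

Lemma deg_le_scal m c f : deg_le m f -> deg_le m (fun t => c * f t).
Proof. intros Hf t. rewrite bdiff_iter_scal, Hf. ring. Qed.

Lemma deg_le_shift m f : deg_le m f -> deg_le m (fun t => f (t - 1)).
Proof. intros Hf t. rewrite bdiff_iter_shift, Hf. reflexivity. Qed.

Lemma deg_le_const c : deg_le 0 (fun _ => c).
Proof. intros t. apply bdiff_iter_const. Qed.

Lemma deg_le_rsum m N (h : nat -> R -> R) : (forall i, (i < N)%nat -> deg_le m (h i)) ->
  deg_le m (fun t => rsum N (fun i => h i t)).
Proof.
  induction N as [|N IH]; intros Hh.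
  - intros t. exact (bdiff_iter_const m 0 t).
  - apply deg_le_ext with (fun t => rsum N (fun i => h i t) + h N t).
    + intros t. rewrite rsum_S. reflexivity.
    + apply deg_le_plus; auto with arith.
Qed.

Lemma deg_le_mul_affine m : forall f c d, deg_le m f ->
  deg_le (S m) (fun t => f t * (c * t + d)).
Proof.
  induction m as [|m IH]; intros f c d Hf;
    apply deg_le_S_bdiff;
    apply deg_le_ext with (fun t => bdiff f t * (c * t + d) + c * f (t - 1));
    try (intros t; unfold bdiff; ring);
    apply deg_le_plus; try (apply deg_le_scal, deg_le_shift, Hf).
  - apply deg_le_ext with (fun _ => 0); [|apply deg_le_const].
    intros t. specialize (Hf t). simpl in Hf. rewrite Hf. ring.
  - apply IH, Hf.
Qed.

Lemma deg_le_mul_rprod_affine p q f (c d : nat -> R) : deg_le p f ->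
  deg_le (p + q) (fun t => f t * rprod q (fun j => c j * t + d j)).
Proof.
  intros Hf. induction q as [|q IH].
  - apply deg_le_ext with f; [intros t; rewrite rprod_0; ring|].
    rewrite Nat.add_0_r. exact Hf.
  - rewrite Nat.add_succ_r.
    apply deg_le_ext with
      (fun t => (f t * rprod q (fun j => c j * t + d j)) * (c q * t + d q)).
    + intros t. rewrite rprod_S. ring.
    + apply deg_le_mul_affine, IH.
Qed.

Lemma C_n_0 n : C n 0 = 1.
Proof. unfold C. rewrite Nat.sub_0_r. simpl. field. apply INR_fact_neq_0. Qed.

Lemma C_n_n n : C n n = 1.
Proof. unfold C. rewrite Nat.sub_diag. simpl. field. apply INR_fact_neq_0. Qed.

Definition alt_binom_sum (n : nat) (f : R -> R) (t : R) : R :=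
  rsum (S n) (fun j => (-1) ^ j * C n j * f (t - INR j)).

Lemma alt_binom_sum_S n f t :
  alt_binom_sum (S n) f t = alt_binom_sum n f t - alt_binom_sum n f (t - 1).
Proof.
  unfold alt_binom_sum.
  rewrite rsum_shift, rsum_S, (rsum_shift n), (rsum_S n (fun j => _ * f (t - 1 - _))).
  rewrite (rsum_ext n _ (fun j => (-1) ^ S j * C n (S j) * f (t - INR (S j))
                                  - (-1) ^ j * C n j * f (t - 1 - INR j))).
  - rewrite rsum_minus, !C_n_0, !C_n_n, S_INR. simpl.
    replace (t - (INR n + 1)) with (t - 1 - INR n) by ring. ring.
  - intros j Hj. rewrite <- (pascal n j Hj), S_INR.
    replace (t - 1 - INR j) with (t - (INR j + 1)) by ring. simpl. ring.
Qed.

Lemma alt_binom_sum_bdiff n f t :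
  alt_binom_sum n (bdiff f) t = alt_binom_sum n f t - alt_binom_sum n f (t - 1).
Proof.
  unfold alt_binom_sum, bdiff. rewrite <- rsum_minus. apply rsum_ext. intros j _.
  replace (t - 1 - INR j) with (t - INR j - 1) by ring. ring.
Qed.

Lemma alt_binom_sum_bdiff_iter n : forall f t, alt_binom_sum n f t = bdiff_iter n f t.
Proof.
  induction n as [|n IH]; intros f t.
  - unfold alt_binom_sum. rewrite rsum_S, rsum_0, C_n_0. simpl.
    replace (t - 0) with t by ring. ring.
  - simpl. rewrite <- IH, alt_binom_sum_S, alt_binom_sum_bdiff. reflexivity.
Qed.

Definition lagrange (n i : nat) (t : R) : R :=
  rprod n (fun j => if Nat.eqb j i then 1 else (t - INR j) / (INR i - INR j)).

Lemma P_lagrange n i k : P n i k = lagrange n i (INR k).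
Proof. reflexivity. Qed.

Lemma lagrange_deg_le n i : (i < n)%nat -> deg_le (n - 1) (lagrange n i).
Proof.
  intros Hi.
  set (c := fun j => / (INR i - INR j)).
  set (d := fun j => - INR j / (INR i - INR j)).
  apply deg_le_ext with (fun t => (1 * rprod i (fun j => c j * t + d j))
                         * rprod (n - S i) (fun j => c (S i + j)%nat * t + d (S i + j)%nat)).
  - intros t. unfold lagrange.
    replace (rprod n) with (rprod (S i + (n - S i))) by (f_equal; lia).
    rewrite rprod_add, rprod_S, Nat.eqb_refl, Rmult_1_r, Rmult_1_l.
    assert (Haff : forall j, j <> i ->
      (if Nat.eqb j i then 1 else (t - INR j) / (INR i - INR j)) = c j * t + d j).
    { intros j Hj. apply Nat.eqb_neq in Hj. rewrite Hj. unfold c, d, Rdiv. ring. }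
    f_equal; apply rprod_ext; intros j Hj; rewrite Haff; auto; lia.
  - replace (n - 1)%nat with (0 + i + (n - S i))%nat by lia.
    apply deg_le_mul_rprod_affine
      with (f := fun t => 1 * rprod i (fun j => c j * t + d j)).
    apply deg_le_mul_rprod_affine, deg_le_const.
Qed.

Lemma P_diag n k : (k < n)%nat -> P n k k = 1.
Proof.
  intros Hk. unfold P. rewrite (rprod_ext n _ (fun _ => 1)), rprod_const, pow1; [reflexivity|].
  intros j _. destruct (Nat.eqb_spec j k) as [|Hjk]; [reflexivity|].
  apply Rinv_r. intros Heq. apply Hjk, INR_eq. lra.
Qed.

Lemma P_off n i k : (k < n)%nat -> i <> k -> P n i k = 0.
Proof.
  intros Hk Hik. unfold P. apply (rprod_zero _ _ k Hk).
  destruct (Nat.eqb_spec k i); [congruence|]. unfold Rdiv. rewrite Rminus_diag. ring.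
Qed.

Definition lagrange_sol (n : nat) (rho : R) (x : nat -> R) (k : nat) : R :=
  rsum n (fun i => x i * P n i k * powerRZ rho (Z.of_nat k - Z.of_nat i)%Z).

Lemma lagrange_sol_init n rho x k : (k < n)%nat -> lagrange_sol n rho x k = x k.
Proof.
  intros Hk. unfold lagrange_sol. rewrite (rsum_single n k); auto.
  - rewrite P_diag, Z.sub_diag by exact Hk. simpl. ring.
  - intros i _ Hik. rewrite P_off by auto. ring.
Qed.

Lemma powerRZ_sub_nat rho k i : (i <= k)%nat ->
  powerRZ rho (Z.of_nat k - Z.of_nat i) = rho ^ (k - i).
Proof. intros Hik. rewrite <- Znat.Nat2Z.inj_sub, <- pow_powerRZ by exact Hik. reflexivity. Qed.

Lemma lagrange_sol_solves n rho x : (1 <= n)%nat -> rho <> 0 ->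
  solves n rho (lagrange_sol n rho x).
Proof.
  intros Hn Hrho k Hk.
  set (F := fun t => rsum n (fun i => x i / rho ^ i * lagrange n i t)).
  assert (HF : deg_le (n - 1) F).
  { apply deg_le_rsum. intros i Hi. apply deg_le_scal, lagrange_deg_le, Hi. }
  assert (Hsol : forall j, lagrange_sol n rho x j = rho ^ j * F (INR j)).
  { intros j. unfold lagrange_sol, F. rewrite <- rsum_scal. apply rsum_ext. intros i _.
    unfold Z.sub. rewrite powerRZ_add, powerRZ_neg', <- !pow_powerRZ by exact Hrho.
    rewrite P_lagrange. field. apply pow_nonzero, Hrho. }
  rewrite (rsum_ext (S n) _ (fun j => rho ^ k * ((-1) ^ j * C n j * F (INR k - INR j)))).
  - rewrite rsum_scal. fold (alt_binom_sum n F (INR k)).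
    rewrite alt_binom_sum_bdiff_iter.
    destruct n as [|m]; [lia|]. rewrite Nat.sub_succ, Nat.sub_0_r in HF. rewrite HF. ring.
  - intros j Hj. rewrite Hsol, minus_INR by lia.
    replace (rho ^ k) with (rho ^ j * rho ^ (k - j)) by (rewrite <- pow_add; f_equal; lia).
    ring.
Qed.

Lemma solves_rec n rho x k : solves n rho x -> (n <= k)%nat ->
  x k = - rsum n (fun j => (-1) ^ S j * C n (S j) * rho ^ S j * x (k - S j)%nat).
Proof.
  intros Hx Hk. specialize (Hx k Hk).
  rewrite rsum_shift, C_n_0, Nat.sub_0_r in Hx. simpl in Hx |- *. lra.
Qed.

Lemma solves_unique n rho x y : solves n rho x -> solves n rho y ->
  (forall i, (i < n)%nat -> x i = y i) -> forall k, x k = y k.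
Proof.
  intros Hx Hy Hinit k.
  induction k as [k IH] using (well_founded_induction Wf_nat.lt_wf).
  destruct (Nat.lt_ge_cases k n) as [Hk|Hk]; [auto|].
  rewrite (solves_rec n rho x k Hx Hk), (solves_rec n rho y k Hy Hk).
  f_equal. apply rsum_ext. intros j Hj. rewrite IH by lia. reflexivity.
Qed.

Lemma solves_lagrange_sol n rho x : (1 <= n)%nat -> rho <> 0 -> solves n rho x ->
  forall k, x k = lagrange_sol n rho x k.
Proof.
  intros Hn Hrho Hx. apply (solves_unique n rho); auto using lagrange_sol_solves.
  intros i Hi. rewrite lagrange_sol_init; auto.
Qed.

Lemma P_S n i k : P (S n) i k =
  P n i k * (if Nat.eqb n i then 1 else (INR k - INR n) / (INR i - INR n)).
Proof. apply rprod_S. Qed.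

(* For k >= n every factor (k - j)/(i - j) is positive for j < i and negative for j > i. *)
Lemma P_sign n i k : (n <= k)%nat -> 0 < (-1) ^ (n - 1 - i) * P n i k.
Proof.
  induction n as [|n IH]; intros Hk.
  - unfold P. rewrite rprod_0. simpl. lra.
  - rewrite P_S. specialize (IH ltac:(lia)).
    assert (Hkn : INR n < INR k) by (apply lt_INR; lia).
    destruct (Nat.eqb_spec n i) as [->|Hne].
    + replace (S i - 1 - i)%nat with (i - 1 - i)%nat by lia. lra.
    + destruct (Nat.lt_ge_cases n i) as [Hlt|Hge].
      * replace (S n - 1 - i)%nat with (n - 1 - i)%nat by lia.
        assert (INR n < INR i) by (apply lt_INR; lia).
        rewrite <- Rmult_assoc.
        apply Rmult_lt_0_compat; [exact IH|apply Rdiv_lt_0_compat; lra].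
      * replace (S n - 1 - i)%nat with (S (n - 1 - i)) by lia.
        assert (INR i < INR n) by (apply lt_INR; lia).
        replace ((-1) ^ S (n - 1 - i) * (P n i k * ((INR k - INR n) / (INR i - INR n))))
          with (((-1) ^ (n - 1 - i) * P n i k) * ((INR k - INR n) / (INR n - INR i)))
          by (simpl; field; lra).
        apply Rmult_lt_0_compat; [exact IH|apply Rdiv_lt_0_compat; lra].
Qed.

Lemma Rabs_P n i k : (n <= k)%nat -> Rabs (P n i k) = (-1) ^ (n - 1 - i) * P n i k.
Proof.
  intros Hk. rewrite <- (Rabs_pos_eq _ (Rlt_le _ _ (P_sign n i k Hk))).
  rewrite Rabs_mult, pow_1_abs. ring.
Qed.

Lemma Rabs_INR_sub_ge_1 i j : i <> j -> 1 <= Rabs (INR i - INR j).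
Proof.
  intros Hij. destruct (Nat.lt_ge_cases i j) as [Hlt|Hge].
  - apply le_INR in Hlt. rewrite S_INR in Hlt. rewrite Rabs_left1; lra.
  - assert (Hlt : (S j <= i)%nat) by lia. apply le_INR in Hlt. rewrite S_INR in Hlt.
    rewrite Rabs_pos_eq; lra.
Qed.

Lemma Rabs_P_le n i k : (n <= k)%nat -> Rabs (P n i k) <= INR k ^ n.
Proof.
  intros Hk. apply rprod_abs_le; [apply pos_INR|]. intros j Hj.
  assert (Hjk : INR j < INR k) by (apply lt_INR; lia).
  destruct (Nat.eqb_spec j i) as [|Hji].
  { rewrite Rabs_R1. apply (le_INR 1). lia. }
  pose proof (Rabs_INR_sub_ge_1 i j (not_eq_sym Hji)) as Hd.
  unfold Rdiv. rewrite Rabs_mult, Rabs_inv, (Rabs_pos_eq (INR k - INR j)) by lra.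
  apply Rle_trans with ((INR k - INR j) * 1); [|pose proof (pos_INR j); lra].
  apply Rmult_le_compat_l; [lra|].
  rewrite <- Rinv_1. apply Rinv_le_contravar; lra.
Qed.

Lemma solves_Rabs_le_alpha n rho x k : (1 <= n)%nat -> 0 < rho ->
  solves n rho x -> init_bounded n x -> (n <= k)%nat -> Rabs (x k) <= alpha n rho k.
Proof.
  intros Hn Hrho Hx Hb Hk. rewrite (solves_lagrange_sol n rho x Hn) by (auto || lra).
  eapply Rle_trans; [apply rsum_abs|]. apply rsum_le. intros i Hi.
  rewrite powerRZ_sub_nat, !Rabs_mult, (Rabs_pos_eq (rho ^ (k - i))) by (lia || (apply pow_le; lra)).
  rewrite Rmult_assoc. rewrite <- (Rmult_1_l (Rabs (P n i k) * _)) at 2.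
  apply Rmult_le_compat_r; [apply Rmult_le_pos; [apply Rabs_pos|apply pow_le; lra]|auto].
Qed.

Lemma solves_alt_init_alpha n rho x k : (1 <= n)%nat -> 0 < rho ->
  solves n rho x -> alt_init n x -> (n <= k)%nat -> x k = alpha n rho k.
Proof.
  intros Hn Hrho Hx Ha Hk. rewrite (solves_lagrange_sol n rho x Hn) by (auto || lra).
  apply rsum_ext. intros i Hi.
  rewrite powerRZ_sub_nat, Ha, Rabs_P by lia. ring.
Qed.

Lemma succ_pow_le m x : 1 <= x -> x * (x + 1) ^ m <= (x + 2 ^ m - 1) * x ^ m.
Proof.
  intros Hx. induction m as [|m IH]; [simpl; lra|].
  assert (H2m : 1 <= 2 ^ m) by (apply pow_R1_Rle; lra).
  assert (Hxm : 0 <= x ^ m) by (apply pow_le; lra).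
  assert (Hgap : 0 <= (x - 1) * (2 ^ m - 1) * x ^ m)
    by (apply Rmult_le_pos; [apply Rmult_le_pos|]; lra).
  simpl. apply Rle_trans with ((x + 1) * ((x + 2 ^ m - 1) * x ^ m)); [|nra].
  rewrite <- Rmult_assoc, (Rmult_comm x (x + 1)), Rmult_assoc.
  apply Rmult_le_compat_l; lra.
Qed.

Lemma eventually_lt_of_ratio_le (s : nat -> R) q N0 c : 0 <= q < 1 -> 0 < c ->
  (forall k, (N0 <= k)%nat -> s (S k) <= q * s k) ->
  exists N, forall k, (N <= k)%nat -> s k < c.
Proof.
  intros Hq Hc Hs.
  assert (Hgeom : forall j, s (N0 + j)%nat <= q ^ j * Rabs (s N0)).
  { induction j as [|j IH]; [simpl; rewrite Nat.add_0_r; pose proof (Rle_abs (s N0)); lra|].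
    rewrite Nat.add_succ_r. eapply Rle_trans; [apply Hs; lia|].
    simpl. rewrite Rmult_assoc. apply Rmult_le_compat_l; lra. }
  assert (HA : 0 < Rabs (s N0) + 1) by (pose proof (Rabs_pos (s N0)); lra).
  destruct (pow_lt_1_zero q ltac:(rewrite Rabs_pos_eq; lra) (c / (Rabs (s N0) + 1)))
    as [M HM]; [apply Rdiv_lt_0_compat; lra|].
  exists (N0 + M)%nat. intros k Hk.
  replace k with (N0 + (k - N0))%nat by lia.
  specialize (HM (k - N0)%nat ltac:(lia)). rewrite Rabs_pos_eq in HM by (apply pow_le; lra).
  apply (Rmult_lt_compat_r (Rabs (s N0) + 1)) in HM; [|exact HA].
  unfold Rdiv in HM. rewrite Rmult_assoc, Rinv_l, Rmult_1_r in HM by lra.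
  pose proof (Hgeom (k - N0)%nat). pose proof (pow_le q (k - N0) (proj1 Hq)). nra.
Qed.

(* The ratio of consecutive terms is at most (1 + (2^m - 1)/k) rho, below (1 + rho)/2 for large k. *)
Lemma pow_mul_geom_eventually_lt m rho c : 0 < rho < 1 -> 0 < c ->
  exists N, forall k, (N <= k)%nat -> INR k ^ m * rho ^ k < c.
Proof.
  intros Hrho Hc. set (q := (1 + rho) / 2).
  destruct (INR_unbounded (Rmax 1 (2 * 2 ^ m * rho / (1 - rho)))) as [N0 HN0].
  pose proof (Rmax_l 1 (2 * 2 ^ m * rho / (1 - rho))).
  pose proof (Rmax_r 1 (2 * 2 ^ m * rho / (1 - rho))).
  apply (eventually_lt_of_ratio_le _ q N0); [unfold q; lra|exact Hc|].
  intros k Hk. apply le_INR in Hk.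
  assert (Hk1 : 1 <= INR k) by lra.
  assert (Hbig : 2 * 2 ^ m * rho <= (1 - rho) * INR k).
  { apply (Rmult_le_reg_r (/ (1 - rho))); [apply Rinv_0_lt_compat; lra|].
    replace ((1 - rho) * INR k * / (1 - rho)) with (INR k) by (field; lra). lra. }
  pose proof (succ_pow_le m (INR k) Hk1) as Hsucc.
  assert (Hkm : 0 <= INR k ^ m) by (apply pow_le; lra).
  assert (Hrk : 0 < rho ^ k) by (apply pow_lt; lra).
  apply (Rmult_le_reg_l (INR k)); [lra|].
  rewrite S_INR. simpl pow.
  apply Rle_trans with (((INR k + 2 ^ m - 1) * INR k ^ m) * (rho * rho ^ k)).
  - rewrite <- Rmult_assoc. apply Rmult_le_compat_r; [apply Rmult_le_pos; lra|exact Hsucc].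
  - unfold q. assert (0 <= INR k ^ m * rho ^ k) by (apply Rmult_le_pos; lra). nra.
Qed.

Lemma finite_argmax (f : nat -> R) a d : exists K, (a <= K <= a + d)%nat /\
  forall k, (a <= k <= a + d)%nat -> f k <= f K.
Proof.
  induction d as [|d [K [HK Hmax]]].
  - exists a. split; [lia|]. intros k Hk. replace k with a by lia. lra.
  - destruct (Rle_dec (f K) (f (a + S d)%nat)) as [Hle|Hgt].
    + exists (a + S d)%nat. split; [lia|]. intros k Hk.
      destruct (Nat.eq_dec k (a + S d)) as [->|]; [lra|].
      eapply Rle_trans; [apply Hmax; lia|exact Hle].
    + exists K. split; [lia|]. intros k Hk.
      destruct (Nat.eq_dec k (a + S d)) as [->|]; [lra|apply Hmax; lia].
Qed.

Lemma argmax_of_eventually_le (f : nat -> R) a N :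
  (forall k, (N <= k)%nat -> f k <= f a) ->
  exists K, (a <= K)%nat /\ forall k, (a <= k)%nat -> f k <= f K.
Proof.
  intros Htail. destruct (finite_argmax f a N) as [K [HK Hmax]].
  exists K. split; [lia|]. intros k Hk.
  destruct (Nat.le_gt_cases k (a + N)) as [Hle|Hgt]; [apply Hmax; lia|].
  eapply Rle_trans; [apply Htail; lia|apply Hmax; lia].
Qed.

Lemma alpha_le n rho k : 0 < rho < 1 -> (n <= k)%nat ->
  alpha n rho k <= INR n * (INR k ^ n * rho ^ (k - n)).
Proof.
  intros Hrho Hk. unfold alpha. rewrite <- rsum_const. apply rsum_le. intros i Hi.
  apply Rmult_le_compat; [apply Rabs_pos|apply pow_le; lra|apply Rabs_P_le, Hk|].
  replace (k - i)%nat with ((k - n) + (n - i))%nat by lia. rewrite pow_add.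
  rewrite <- (Rmult_1_r (rho ^ (k - n))) at 2.
  apply Rmult_le_compat_l; [apply pow_le; lra|].
  rewrite <- (pow1 (n - i)). apply pow_incr. lra.
Qed.

Lemma alpha_pos n rho : (1 <= n)%nat -> 0 < rho -> 0 < alpha n rho n.
Proof.
  intros Hn Hrho. destruct n as [|m]; [lia|]. unfold alpha. rewrite rsum_S.
  apply Rplus_le_lt_0_compat.
  - rewrite <- (Rmult_0_r (INR m)), <- rsum_const. apply rsum_le. intros i _.
    apply Rmult_le_pos; [apply Rabs_pos|apply pow_le; lra].
  - apply Rmult_lt_0_compat; [|apply pow_lt, Hrho].
    rewrite Rabs_P by lia. apply P_sign. lia.
Qed.

Lemma alpha_argmax n rho : (1 <= n)%nat -> 0 < rho < 1 ->
  exists K, (n <= K)%nat /\ forall k, (n <= k)%nat -> alpha n rho k <= alpha n rho K.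
Proof.
  intros Hn Hrho.
  assert (HnR : 0 < INR n) by (apply (lt_INR 0); lia).
  assert (Hrn : 0 < rho ^ n) by (apply pow_lt; lra).
  pose proof (alpha_pos n rho Hn (proj1 Hrho)) as Ha.
  destruct (pow_mul_geom_eventually_lt n rho (alpha n rho n * rho ^ n / INR n) Hrho)
    as [N HN]; [apply Rdiv_lt_0_compat; [apply Rmult_lt_0_compat|]; lra|].
  apply (argmax_of_eventually_le _ n (n + N)). intros k Hk.
  eapply Rle_trans; [apply alpha_le; [exact Hrho|lia]|].
  specialize (HN k ltac:(lia)).
  replace k with ((k - n) + n)%nat in HN at 2 by lia. rewrite pow_add in HN.
  apply (Rmult_lt_compat_l (INR n / rho ^ n)) in HN; [|apply Rdiv_lt_0_compat; lra].
  replace (INR n / rho ^ n * (alpha n rho n * rho ^ n / INR n)) with (alpha n rho n)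
    in HN by (field; lra).
  replace (INR n / rho ^ n * (INR k ^ n * (rho ^ (k - n) * rho ^ n)))
    with (INR n * (INR k ^ n * rho ^ (k - n))) in HN by (field; lra).
  lra.
Qed.

Lemma rprod_sub_fact k m : (m <= k)%nat ->
  rprod m (fun j => INR k - INR j) * INR (fact (k - m)) = INR (fact k).
Proof.
  induction m as [|m IH]; intros Hm; [rewrite rprod_0, Nat.sub_0_r; ring|].
  rewrite rprod_S, <- IH by lia.
  replace (k - m)%nat with (S (k - S m)) by lia. rewrite fact_simpl, mult_INR.
  replace (INR (S (k - S m))) with (INR k - INR m) by (rewrite <- minus_INR by lia; f_equal; lia).
  ring.
Qed.

Lemma C_rprod k m : (m <= k)%nat ->
  C k m = rprod m (fun j => (INR k - INR j) / (INR m - INR j)).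
Proof.
  intros Hm. rewrite rprod_div. unfold C.
  rewrite <- (rprod_sub_fact k m Hm), <- (rprod_sub_fact m m (le_n m)), Nat.sub_diag.
  assert (Hm0 : rprod m (fun j => INR m - INR j) <> 0).
  { intros H0. pose proof (rprod_sub_fact m m (le_n m)) as Hf.
    rewrite H0, Rmult_0_l in Hf. apply (INR_fact_neq_0 m). lra. }
  pose proof (INR_fact_neq_0 (k - m)). simpl. field. auto.
Qed.

Lemma P_last m k : (m <= k)%nat -> P (S m) m k = C k m.
Proof.
  intros Hm. rewrite P_S, Nat.eqb_refl, Rmult_1_r, C_rprod by exact Hm.
  apply rprod_ext. intros j Hj. destruct (Nat.eqb_spec j m); [lia|reflexivity].
Qed.

Lemma solves_unit_init_beta n rho x k : (1 <= n)%nat -> 0 < rho ->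
  solves n rho x -> unit_init n x -> (n - 1 <= k)%nat -> x k = beta n rho k.
Proof.
  intros Hn Hrho Hx Hu Hk. rewrite (solves_lagrange_sol n rho x Hn) by (auto || lra).
  unfold lagrange_sol, beta. rewrite (rsum_single n (n - 1)); [|lia|].
  - rewrite Hu, Nat.eqb_refl, powerRZ_sub_nat by lia.
    destruct n as [|m]; [lia|]. rewrite Nat.sub_succ, Nat.sub_0_r, P_last by lia.
    replace (k + 1 - S m)%nat with (k - m)%nat by lia. ring.
  - intros i Hi Hne. rewrite Hu by exact Hi.
    destruct (Nat.eqb_spec i (n - 1)); [lia|ring].
Qed.

Lemma nondecreasing_le (f : nat -> R) a b :
  (forall k, (a <= k)%nat -> (S k <= b)%nat -> f k <= f (S k)) ->
  forall k, (a <= k <= b)%nat -> f k <= f b.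
Proof.
  intros Hinc k Hk. remember (b - k)%nat as d eqn:Hd. revert k Hk Hd.
  induction d as [|d IH]; intros k Hk Hd; [replace b with k by lia; lra|].
  eapply Rle_trans; [apply Hinc; lia|apply IH; lia].
Qed.

Lemma nonincreasing_le (f : nat -> R) a :
  (forall k, (a <= k)%nat -> f (S k) <= f k) -> forall k, (a <= k)%nat -> f k <= f a.
Proof.
  intros Hdec k Hk. induction k as [|k IH]; [replace a with 0%nat by lia; lra|].
  destruct (Nat.eq_dec a (S k)) as [->|Hne]; [lra|].
  eapply Rle_trans; [apply Hdec; lia|apply IH; lia].
Qed.

Section Beta.

Variables (m : nat) (rho : R).
Hypothesis Hrho : 0 < rho < 1.

Lemma beta_S k : (m <= k)%nat ->
  beta (S m) rho (S k) * (INR (S k) - INR m) = beta (S m) rho k * INR (S k) * rho.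
Proof.
  intros Hk. unfold beta, C. rewrite Nat.sub_succ, Nat.sub_0_r.
  replace (S k + 1 - S m)%nat with (S (k - m)) by lia.
  replace (k + 1 - S m)%nat with (k - m)%nat by lia.
  replace (S k - m)%nat with (S (k - m)) by lia.
  rewrite !fact_simpl, !mult_INR.
  replace (INR (S (k - m))) with (INR (S k) - INR m) by (rewrite <- minus_INR by lia; f_equal; lia).
  assert (INR m < INR (S k)) by (apply lt_INR; lia).
  pose proof (INR_fact_neq_0 m). pose proof (INR_fact_neq_0 (k - m)).
  simpl pow. field. lra.
Qed.

Lemma beta_nonneg k : 0 <= beta (S m) rho k.
Proof.
  unfold beta, C. apply Rmult_le_pos; [|apply pow_le; lra].
  apply Rmult_le_pos; [apply pos_INR|].
  left. apply Rinv_0_lt_compat, Rmult_lt_0_compat; apply INR_fact_lt_0.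
Qed.

Lemma beta_le_S k : (m <= k)%nat -> INR (S k) * (1 - rho) <= INR m ->
  beta (S m) rho k <= beta (S m) rho (S k).
Proof.
  intros Hk Hr. pose proof (beta_S k Hk). pose proof (beta_nonneg k).
  assert (INR m < INR (S k)) by (apply lt_INR; lia).
  apply (Rmult_le_reg_r (INR (S k) - INR m)); nra.
Qed.

Lemma beta_S_le k : (m <= k)%nat -> INR m <= INR (S k) * (1 - rho) ->
  beta (S m) rho (S k) <= beta (S m) rho k.
Proof.
  intros Hk Hr. pose proof (beta_S k Hk). pose proof (beta_nonneg k).
  assert (INR m < INR (S k)) by (apply lt_INR; lia).
  apply (Rmult_le_reg_r (INR (S k) - INR m)); nra.
Qed.

(* The ratio beta_{k+1}/beta_k = (k+1) rho / (k+1-m) is >= 1 exactly when k+1 <= m/(1-rho). *)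
Lemma beta_argmax (K := Z.to_nat (Int_part (INR m / (1 - rho)))) :
  (m <= K)%nat /\ forall k, (m <= k)%nat -> beta (S m) rho k <= beta (S m) rho K.
Proof.
  set (r := INR m / (1 - rho)).
  assert (Hr : r * (1 - rho) = INR m) by (unfold r; field; lra).
  assert (HK : INR K <= r < INR K + 1).
  { destruct (base_Int_part r) as [H1 H2].
    assert (0 <= r) by (unfold r; apply Rmult_le_pos; [apply pos_INR|left; apply Rinv_0_lt_compat; lra]).
    assert (Hz : (0 <= Int_part r)%Z) by (cut (-1 < Int_part r)%Z; [lia|apply lt_IZR; lra]).
    unfold K. rewrite INR_IZR_INZ, Znat.Z2Nat.id by exact Hz. fold r. lra. }
  assert (HmK : (m <= K)%nat).
  { apply Nat.lt_succ_r, INR_lt. rewrite S_INR. pose proof (pos_INR m). nra. }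
  split; [exact HmK|]. intros k Hk.
  destruct (Nat.le_gt_cases k K) as [HkK|HkK].
  - apply (nondecreasing_le _ m); [|lia]. intros j Hj HjK.
    apply beta_le_S; [exact Hj|]. apply le_INR in HjK. nra.
  - apply (nonincreasing_le _ K); [|lia]. intros j Hj.
    apply beta_S_le; [lia|]. apply le_INR in Hj. rewrite S_INR. nra.
Qed.

Lemma beta_peak_iff :
  (exists k, (S m <= k)%nat /\ 1 < beta (S m) rho k) <-> 1 / INR (S m) < rho.
Proof.
  assert (Hn : 0 < INR (S m)) by (apply lt_0_INR; lia).
  assert (Hbn : beta (S m) rho (S m) = INR (S m) * rho).
  { pose proof (beta_S m (le_n m)) as H. unfold beta in H |- *.
    rewrite Nat.sub_succ, Nat.sub_0_r in *. rewrite C_n_n in H.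
    replace (m + 1 - m)%nat with 1%nat by lia. replace (m + 1 - S m)%nat with 0%nat in H by lia.
    rewrite S_INR in *. simpl in *. lra. }
  assert (Hiff : 1 / INR (S m) < rho <-> 1 < INR (S m) * rho).
  { set (d := 1 / INR (S m)). assert (Hd : d * INR (S m) = 1) by (unfold d; field; lra).
    split; intros; nra. }
  rewrite Hiff. split.
  - intros [k [Hk Hbk]]. apply Rnot_le_lt. intros Hle.
    assert (Hdec : forall j, (S m <= j)%nat -> beta (S m) rho (S j) <= beta (S m) rho j).
    { intros j Hj. apply beta_S_le; [lia|]. apply le_INR in Hj. rewrite !S_INR in *. nra. }
    pose proof (nonincreasing_le _ (S m) Hdec k Hk). lra.
  - intros H. exists (S m). split; [lia|]. lra.
Qed.

End Beta.

Theorem theorem2p1 (n : nat) (rho : R) (Hn : (1 <= n)%nat)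
  (Hrho0 : 0 < rho) (Hrho1 : rho < 1) :
  (forall x : nat -> R, solves n rho x ->
     forall k : nat,
       x k = rsum n (fun i => x i * P n i k *
                               powerRZ rho (Z.of_nat k - Z.of_nat i)%Z))
  /\
  ((forall x : nat -> R, solves n rho x -> init_bounded n x ->
      forall k : nat, (n <= k)%nat -> x k <= alpha n rho k /\ Rabs (x k) <= alpha n rho k)
   /\ (forall x : nat -> R, solves n rho x -> alt_init n x ->
      forall k : nat, (n <= k)%nat -> x k = alpha n rho k)
   /\ (exists K : nat, (n <= K)%nat /\
         forall k : nat, (n <= k)%nat -> alpha n rho k <= alpha n rho K)
   /\ (forall K : nat, (n <= K)%nat ->
         (forall k : nat, (n <= k)%nat -> alpha n rho k <= alpha n rho K) ->
         (forall x : nat -> R, solves n rho x -> init_bounded n x ->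
            forall k : nat, (n <= k)%nat -> Rabs (x k) <= alpha n rho K)
         /\ (forall x : nat -> R, solves n rho x -> alt_init n x ->
               x K = alpha n rho K)))
  /\
  ((forall x : nat -> R, solves n rho x -> unit_init n x ->
      forall k : nat, (n - 1 <= k)%nat -> x k = beta n rho k)
   /\ (let Kb := Z.to_nat (Int_part ((INR n - 1) / (1 - rho))) in
       (n - 1 <= Kb)%nat /\
       forall k : nat, (n - 1 <= k)%nat -> beta n rho k <= beta n rho Kb)
   /\ ((exists k : nat, (n <= k)%nat /\ 1 < beta n rho k) <-> 1 / INR n < rho)).
Proof.
  assert (Hrho : 0 < rho < 1) by lra.
  pose proof (fun x k => solves_Rabs_le_alpha n rho x k Hn Hrho0) as Hbound.
  pose proof (fun x k => solves_alt_init_alpha n rho x k Hn Hrho0) as Halt.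
  split; [|split].
  - intros x Hx. apply solves_lagrange_sol; auto; lra.
  - split; [|split; [|split]].
    + intros x Hx Hb k Hk. pose proof (Hbound x k Hx Hb Hk). split; [|assumption].
      eapply Rle_trans; [apply Rle_abs|assumption].
    + intros x Hx Ha k. exact (Halt x k Hx Ha).
    + exact (alpha_argmax n rho Hn Hrho).
    + intros K HK Hmax. split.
      * intros x Hx Hb k Hk. eapply Rle_trans; [apply (Hbound x k Hx Hb Hk)|auto].
      * intros x Hx Ha. exact (Halt x K Hx Ha HK).
  - split; [intros x Hx Hu k; exact (solves_unit_init_beta n rho x k Hn Hrho0 Hx Hu)|].
    destruct n as [|m]; [lia|].
    replace (INR (S m) - 1) with (INR m) by (rewrite S_INR; ring).
    rewrite Nat.sub_succ, Nat.sub_0_r.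
    exact (conj (beta_argmax m rho Hrho) (beta_peak_iff m rho Hrho)).
Qed.
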